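(* Let $r\ge1$. For every $N\ge1$, every $k\in\mathbb{N}$ and all $d,d'\in\mathbb{Z}$, \[\frac1N\Big|\{n<N:(\Delta^{(r)}(n),\Delta^{(r)}_k(n))=(d,d')\}\Big|\le rb\;\mathbb{P}\big(\{x\in\mathbb{X}:(\Delta^{(r)}(x),\Delta^{(r)}_k(x))=(d,d')\}\big).\] In particular $\frac1N|\{n<N:\Delta^{(r)}(n)=d\}|\le rb\,\mathbb{P}(\{x\in\mathbb{X}:\Delta^{(r)}(x)=d\})$.
   Context: Fix an integer $b\ge2$. $\mathbb{X}:=\{0,\dots,b-1\}^{\mathbb{N}}$ is the space of $b$-adic integers $x=(x_k)_{k\ge0}$ (with $x_0$ the units digit), with the product topology and the addition with carries extending addition of integers: $(x+y)_0$ and carry $c_0$ are determined by $x_0+y_0$ (if $<b$, digit $x_0+y_0$ and carry $0$; else digit $x_0+y_0-b$ and carry $1$), and inductively $(x+y)_\ell$, $c_\ell$ from $x_\ell+y_\ell+c_{\ell-1}$ in the same way. $\mathbb{N}$ is embedded in $\mathbb{X}$ by identifying $n$ with its sequence of base-$b$ digits (finitely many nonzero). $T(x):=x+1$. $\mathbb{P}$ is the normalized Haar measure on $\mathbb{X}$, i.e. the product of uniform measures on $\{0,\dots,b-1\}$ (digits i.i.d. uniform). For $k\in\mathbb{N}$, $s_k(x):=x_0+\dots+x_k$ and $\Delta_k^{(r)}(x):=s_k(x+r)-s_k(x)$. For all $x$ except finitely many, $x$ and $x+r$ differ in only finitely many digits and $\Delta^{(r)}(x):=\lim_{k\to\infty}\Delta_k^{(r)}(x)$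 is defined; for $n\in\mathbb{N}$ it equals $s(n+r)-s(n)$, where $s$ is the base-$b$ sum of digits. *)

From HB Require Import structures.
From mathcomp Require Import all_boot all_order all_algebra.
From mathcomp Require Import all_classical all_reals all_analysis.
Set Implicit Arguments. Unset Strict Implicit. Unset Printing Implicit Defensive.
Import Order.TTheory GRing.Theory Num.Theory.

(* The base is b = c.+2 (i.e. an arbitrary integer b >= 2); a digit is an
   element of 'I_b and a b-adic integer is a digit sequence nat -> 'I_b,
   x 0 being the units digit. *)
Definition base (c : nat) : nat := c.+2.
Definition digit (c : nat) := 'I_(base c).
Definition badic (c : nat) := nat -> digit c.

HB.instance Definition _ (c : nat) := gen_eqMixin (badic c).
HB.instance Definition _ (c : nat) := gen_choiceMixin (badic c).
HB.instance Definition _ (c : nat) := isPointed.Build (badic c) (fun _ => ord0).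

Fixpoint carry (c : nat) (x y : badic c) (l : nat) : nat :=
  match l with
  | 0 => 0
  | l'.+1 => (x l' + y l' + carry x y l') %/ base c
  end.

Lemma digit_lt (c m : nat) : m %% base c < base c.
Proof. by rewrite ltn_pmod. Qed.

Definition mkdigit (c m : nat) : digit c := Ordinal (digit_lt c m).

Definition addX (c : nat) (x y : badic c) : badic c :=
  fun l => mkdigit c (x l + y l + carry x y l).

Definition natX (c : nat) (n : nat) : badic c :=
  fun k => mkdigit c (n %/ base c ^ k).

Definition sX (c : nat) (k : nat) (x : badic c) : nat :=
  (\sum_(i < k.+1) (x i : nat))%N.

Definition Delta_k (c r k : nat) (x : badic c) : int :=
  (Posz (sX k (addX x (natX c r))) - Posz (sX k x))%R.

(* Delta^{(r)}(x) = d : the integer sequence (Delta_k^{(r)}(x))_k converges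
   (i.e. is eventually constant) with limit d. *)
Definition DeltaIs (c r : nat) (x : badic c) (d : int) : Prop :=
  exists K, forall k, (K <= k)%N -> Delta_k r k x = d.

Definition cyl (c K : nat) (w : badic c) : set (badic c) :=
  [set x | forall i, (i < K)%N -> x i = w i].

Definition cylinders (c : nat) : set (set (badic c)) :=
  [set A | exists K w, A = cyl K w].

(* X with the sigma-algebra generated by the cylinders (= Borel sets of the
   product topology). *)
Definition XM (c : nat) := g_sigma_algebraType (@cylinders c).

(* Haar measure = product of uniform measures on digits: a probability measure
   on XM giving mass b^-K to every cylinder of length K (this determines it). *)
Definition is_haar (c : nat) (R : realType) (P : probability (XM c) R) : Prop :=
  forall (K : nat) (w : badic c), P (cyl K w) = (((base c)%:R : R) ^- K)%:E.

From HB Require Import structures.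
From mathcomp Require Import all_boot all_order all_algebra.
From mathcomp Require Import all_classical all_reals all_analysis.
From mathcomp Require Import zify ring.
Import Order.TTheory GRing.Theory Num.Theory.

Set Implicit Arguments.
Unset Strict Implicit.
Unset Printing Implicit Defensive.

(* Pick L with N + r <= b^L <= r N b.  For n < N, adding r to any x whose
   first L digits are those of n produces no carry into position L, because
   n + r < b^L; hence x + r agrees with x from position L on and every
   Delta_k^(r) is constant on that cylinder.  These N cylinders are disjoint
   of mass b^-L, so the count times b^-L is at most the measure, and
   count / N <= (b^L / N) P(...) <= r b P(...). *)

Section Carries.
Variable c : nat.
Local Notation b := (base c).
Implicit Types x y : badic c.

Lemma carry_ext x y x' y' i :
  (forall j, (j < i)%N -> x j = x' j /\ y j = y' j) ->
  carry x y i = carry x' y' i.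
Proof.
elim: i => [//|i IH] H /=.
have [-> ->] := H i (ltnSn i).
by rewrite IH // => j ji; apply: H; exact: ltnW.
Qed.

Lemma addX_ext x y x' y' i :
  (forall j, (j <= i)%N -> x j = x' j /\ y j = y' j) ->
  addX x y i = addX x' y' i.
Proof.
move=> H; rewrite /addX.
have [-> ->] := H i (leqnn i).
by rewrite (@carry_ext x y x' y' i) // => j ji; apply: H; exact: ltnW.
Qed.

Lemma natX_succ n i : natX c n i.+1 = natX c (n %/ b) i.
Proof. by apply: val_inj; rewrite /= expnS divnMA. Qed.

Lemma addX_expansion x y K :
  (\sum_(j < K) x j * b ^ j + \sum_(j < K) y j * b ^ j
  = \sum_(j < K) addX x y j * b ^ j + carry x y K * b ^ K)%N.
Proof.
elim: K => [|K IH]; first by rewrite !big_ord0.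
rewrite !big_ord_recr addnACA IH -!addnA; congr (_ + _) => /=.
have := congr1 (muln^~ (b ^ K)) (divn_eq (x K + y K + carry x y K) b).
rewrite expnSr; nia.
Qed.

Lemma natX_expansion K n : (n < b ^ K)%N ->
  (\sum_(j < K) natX c n j * b ^ j)%N = n.
Proof.
elim: K n => [|K IH] n hn.
  by rewrite big_ord0; move: hn; rewrite expn0; case: n.
rewrite big_ord_recl.
under eq_bigr do rewrite lift0 natX_succ expnS mulnCA.
rewrite -big_distrr /= IH; last by rewrite ltn_divLR // mulnC -expnS.
rewrite expn0 divn1 muln1; have := divn_eq n b; lia.
Qed.

Lemma natX_inj_lt L n m : (n < b ^ L)%N -> (m < b ^ L)%N ->
  (forall i, (i < L)%N -> natX c n i = natX c m i) -> n = m.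
Proof.
move=> hn hm H; rewrite -(natX_expansion hn) -(natX_expansion hm).
by apply: eq_bigr => i _; rewrite H.
Qed.

Lemma natX_digit_eq0 n j : (n < b ^ j)%N -> (natX c n j : nat) = 0%N.
Proof. by move=> h; rewrite /= divn_small. Qed.

Lemma addX_tail x y L :
  (forall j, (L <= j)%N -> (y j : nat) = 0%N) -> carry x y L = 0%N ->
  forall j, (L <= j)%N -> addX x y j = x j.
Proof.
move=> y0 cL0.
have step j : carry x y j = 0%N -> (L <= j)%N ->
    carry x y j.+1 = 0%N /\ addX x y j = x j.
  move=> cj0 hj; rewrite /addX /= cj0 y0 // !addn0.
  by split; [rewrite divn_small | apply: val_inj; rewrite /= modn_small].
have carry0 m : carry x y (L + m) = 0%N.
  by elim: m => [|m IH]; rewrite ?addn0 // addnS; case: (step _ IH (leq_addr _ _)).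
move=> j hj; rewrite -(subnKC hj).
by case: (step _ (carry0 (j - L)%N) (leq_addr _ _)).
Qed.

Lemma carry_cyl_natX r L n x : (n + r < b ^ L)%N -> cyl L (natX c n) x ->
  carry x (natX c r) L = 0%N.
Proof.
move=> h hx; have := addX_expansion x (natX c r) L.
under eq_bigr => j _ do rewrite hx //.
by rewrite !natX_expansion; [nia | lia | lia].
Qed.

Lemma Delta_k_cyl r L n x : (n + r < b ^ L)%N -> cyl L (natX c n) x ->
  forall k, Delta_k r k x = Delta_k r k (natX c n).
Proof.
move=> h hx k.
have r0 j : (L <= j)%N -> (natX c r j : nat) = 0%N.
  move=> hj; apply: natX_digit_eq0.
  by apply: leq_trans (leq_pexp2l (isT : (0 < b)%N) hj); lia.
have tail := addX_tail r0 (carry_cyl_natX h hx).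
have tail_n := addX_tail r0 (carry_cyl_natX h (fun _ _ => erefl)).
have head j : (j < L)%N -> addX x (natX c r) j = addX (natX c n) (natX c r) j.
  by move=> hj; apply: addX_ext => i hi; split=> //; apply: hx; lia.
rewrite /Delta_k /sX.
set A := (\sum_(i < k.+1) _)%N; set B := (\sum_(i < k.+1) _)%N.
set A' := (\sum_(i < k.+1) _)%N; set B' := (\sum_(i < k.+1) _)%N.
suff : (A + B' = A' + B)%N by lia.
rewrite -!big_split; apply: eq_bigr => j _.
case: (ltnP j L) => hj; first by rewrite head // hx.
by rewrite tail // tail_n //= addnC.
Qed.

Lemma DeltaIs_cyl r d L n x : (n + r < b ^ L)%N -> cyl L (natX c n) x ->
  DeltaIs r (natX c n) d -> DeltaIs r x d.
Proof.
by move=> h hx [K hK]; exists K => k hk; rewrite (Delta_k_cyl h hx); exact: hK.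
Qed.

End Carries.

Section Measurability.
Variable c : nat.
Local Notation b := (base c).
Local Open Scope classical_set_scope.

Lemma natX_prefix K (x : badic c) : exists m, cyl K (natX c m) x.
Proof.
elim: K x => [|K IH] x; first by exists 0%N.
have [m hm] := IH (fun i => x i.+1).
exists (x 0%N + b * m)%N => -[_|i hi].
  by apply: val_inj; rewrite /= expn0 divn1 addnC mulnC modnMDl modn_small.
rewrite natX_succ addnC mulnC divnMDl // divn_small ?addn0 //; exact: hm.
Qed.

Lemma cyl_measurable K w : measurable (cyl K w : set (XM c)).
Proof. by apply: sub_sigma_algebra; exists K, w. Qed.

(* A set determined by the first K digits is a countable union of cylinders. *)
Lemma measurable_prefix_determined K (A : set (XM c)) :
  (forall x x' : badic c, (forall i, (i < K)%N -> x i = x' i) -> A x -> A x') ->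
  measurable A.
Proof.
move=> HA.
have -> : A = \bigcup_(m in [set m | A (natX c m)]) (cyl K (natX c m) : set (XM c)).
  apply/seteqP; split=> [x Ax | x [m /= Am hx]].
    by have [m hm] := natX_prefix K x; exists m => //=; exact: HA Ax.
  by apply: HA Am => i hi; rewrite hx.
by apply: bigcup_measurable => m _; exact: cyl_measurable.
Qed.

Lemma Delta_k_prefix_determined r k (x x' : badic c) :
  (forall i, (i < k.+1)%N -> x i = x' i) -> Delta_k r k x = Delta_k r k x'.
Proof.
move=> H; rewrite /Delta_k /sX; congr (Posz _ - Posz _)%R; apply: eq_bigr => i _.
  congr nat_of_ord; apply: addX_ext => j hj; split=> //.
  by apply: H; exact: leq_ltn_trans hj (ltn_ord i).
by rewrite H.
Qed.

Lemma measurable_Delta_k r k v : measurable [set x : XM c | Delta_k r k x = v].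
Proof.
apply: (@measurable_prefix_determined k.+1) => x x' h /= <-.
by rewrite (Delta_k_prefix_determined r h).
Qed.

Lemma measurable_DeltaIs r d : measurable [set x : XM c | DeltaIs r x d].
Proof.
have -> : [set x : XM c | DeltaIs r x d] = \bigcup_(K in setT)
    \bigcap_(k in [set k | (K <= k)%N]) [set x : XM c | Delta_k r k x = d].
  by apply/seteqP; split=> x /= [K]; [exists K | move=> _; exists K].
apply: bigcup_measurable => K _; apply: bigcap_measurable; first by exists K => /=.
by move=> k _; exact: measurable_Delta_k.
Qed.

End Measurability.

Lemma exists_expn_between m r N : (1 < m)%N -> (1 <= r)%N -> (1 <= N)%N ->
  exists L, (N + r <= m ^ L)%N /\ (m ^ L <= r * N * m)%N.
Proof.
move=> m1 r1 N1; exists (trunc_log m (N + r).-1).+1; split.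
  by have := trunc_log_ltn (N + r).-1 m1; lia.
rewrite expnS mulnC leq_mul2r; apply/orP; right.
by apply: leq_trans (trunc_logP m1 _) _; nia.
Qed.

Section Counting.
Variables (c : nat) (R : realType) (P : probability (XM c) R).
Hypothesis HP : is_haar P.
Local Notation b := (base c).
Local Open Scope classical_set_scope.
Local Open Scope ring_scope.

Lemma card_cyl_le_measure (Q : badic c -> Prop) N L :
  measurable [set x : XM c | Q x] -> (N <= b ^ L)%N ->
  (forall n x, (n < N)%N -> cyl L (natX c n) x -> Q (natX c n) -> Q x) ->
  ((#|[set n : 'I_N | `[< Q (natX c n) >]]|%:R * (b%:R ^- L))%:E
     <= P [set x : XM c | Q x])%E.
Proof.
move=> mQ NL HQ.
pose F (i : 'I_N) := cyl L (natX c i) : set (XM c).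
pose p (i : 'I_N) := `[< Q (natX c i) >].
have mF i : measurable (F i) by exact: cyl_measurable.
have FQ : \big[setU/set0]_(i < N | p i) F i `<=` [set x : XM c | Q x].
  apply: (big_ind (fun S => S `<=` [set x : XM c | Q x])) => //.
    by move=> S T hS hT x [/hS|/hT].
  by move=> i /asboolP Qi x hx; exact: HQ (ltn_ord i) hx Qi.
have disjF : trivIset p F.
  move=> i j _ _ [x [hi hj]]; apply: val_inj; apply: (@natX_inj_lt c L).
  - exact: leq_trans (ltn_ord i) NL.
  - exact: leq_trans (ltn_ord j) NL.
  - by move=> k hk; rewrite -(hi k hk) -(hj k hk).
apply: le_trans (le_measure P _ _ FQ); rewrite ?inE //; last first.
  by apply: bigsetU_measurable => i _.
rewrite measure_bigsetU_ord_cond //.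
rewrite (eq_big (mem [set n : 'I_N | p n]) (fun=> (b%:R ^- L : R)%:E)).
- by rewrite sumEFin sumr_const mulr_natl.
- by move=> i; apply/idP/idP => [/mem_set | /set_mem].
- by move=> i _; exact: HP.
Qed.

Lemma density_le_measure (Q : badic c -> Prop) r N : (1 <= r)%N -> (1 <= N)%N ->
  measurable [set x : XM c | Q x] ->
  (forall L n x, (n + r < b ^ L)%N -> cyl L (natX c n) x -> Q (natX c n) -> Q x) ->
  ((#|[set n : 'I_N | `[< Q (natX c n) >]]|%:R / N%:R : R)%:E
     <= ((r * b)%:R : R)%:E * P [set x : XM c | Q x])%E.
Proof.
move=> r1 N1 mQ HQ.
have [L [NrL LrNb]] := exists_expn_between (isT : (1 < b)%N) r1 N1.
have HQL n x : (n < N)%N -> cyl L (natX c n) x -> Q (natX c n) -> Q x.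
  by move=> hn; apply: HQ; lia.
have := card_cyl_le_measure mQ (_ : (N <= b ^ L)%N) HQL.
set S := (#|_|%:R : R); set B := (b%:R ^+ L : R) => /(_ ltac:(lia)) HS.
have B0 : B != 0 by rewrite expf_neq0 // pnatr_eq0.
have -> : S / N%:R = B / N%:R * (S / B).
  by field; rewrite B0 pnatr_eq0 -lt0n N1.
rewrite EFinM; apply: le_trans (_ : _ <= ((r * b)%:R)%:E * (S / B)%:E)%E _.
  apply: lee_wpmul2r; first by rewrite lee_fin divr_ge0 ?ler0n // exprn_ge0.
  by rewrite lee_fin ler_pdivrMr ?ltr0n // /B -natrX -natrM ler_nat; lia.
by apply: lee_wpmul2l => //; rewrite lee_fin.
Qed.

End Counting.

Local Open Scope ring_scope.
Local Open Scope classical_set_scope.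

Theorem mainTheorem4 (c : nat) (R : realType) (P : probability (XM c) R)
  (HP : is_haar P) (r : nat) (hr : (1 <= r)%N) :
  (forall (N : nat) (k : nat) (d d' : int), (1 <= N)%N ->
     ((#|[set n : 'I_N | `[< DeltaIs r (natX c n) d /\
                            Delta_k r k (natX c n) = d' >]]|%:R / N%:R : R)%:E
     <= ((r * base c)%:R : R)%:E *
        P [set x : XM c | DeltaIs r x d /\ Delta_k r k x = d'])%E) /\
  (forall (N : nat) (d : int), (1 <= N)%N ->
     ((#|[set n : 'I_N | `[< DeltaIs r (natX c n) d >]]|%:R / N%:R : R)%:E
     <= ((r * base c)%:R : R)%:E * P [set x : XM c | DeltaIs r x d])%E).
Proof.
split=> [N k d d' N1 | N d N1]; apply: density_le_measure => //.
- exact: (measurableI _ _ (measurable_DeltaIs r d) (measurable_Delta_k r k d')).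
- move=> L n x h hx [Dn Dkn]; split; first exact: DeltaIs_cyl h hx Dn.
  by rewrite (Delta_k_cyl h hx).
- exact: measurable_DeltaIs.
- by move=> L n x; exact: DeltaIs_cyl.
Qed.
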